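(* Let $k,n$ be positive integers with $k\leqslant n$ and let $C\in\mathrm{Conf}([n]^k_<)$ be a shelling order. Then its promotion $\partial_D C$ is a shelling order.
   Context: $[n]:=\{1,\ldots,n\}$; $[n]^k_<$ denotes the set of $k$-element subsets of $[n]$. $\mathrm{Conf}([n]^k_<)$ is the set of tuples $C=(C_1,\ldots,C_h)$, $h\geqslant1$, of pairwise distinct elements of $[n]^k_<$. $C$ is a shelling order if for all $i<j$ in $[h]$ there exists $z<j$ with $|C_z\cap C_j|=k-1$ and $C_i\cap C_j\subseteq C_z\cap C_j$. The dual graph $D(C)$ is the graph on vertex set $[h]$ with $\{i,j\}$ an edge iff $|C_i\cap C_j|=k-1$. For a graph $G$ on vertex set $[h]$, its track $T_G=\{v_1,\ldots,v_r\}$ is defined by $v_1=1$ and, for $i\geqslant 2$, $v_i=\min\{j\in[h]: j>v_{i-1},\ \{v_{i-1},j\}\text{ an edge}\}$ if this minimum exists, otherwise $r=i-1$. The promotion of $G$ is the permutation $\partial_G\in S_h$ with $\partial_G(i)=i-1$ for $i\notin T_G$, $\partial_G(v_j)=v_{j+1}-1$ for $j\in[r-1]$, and $\partial_G(v_r)=h$. For $\sigma\in S_h$ set $\sigma C:=(C_{\sigma^{-1}(1)},\ldots,C_{\sigma^{-1}(h)})$. The promotion of $C$ is $\partial_D C:=\partial_{D(C)}C$. *)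

From mathcomp Require Import all_boot.
Set Implicit Arguments. Unset Strict Implicit. Unset Printing Implicit Defensive.

(* Indices are 1-based as in the paper: a configuration C = (C_1,...,C_h)
   is a sequence of k-subsets of [n] = 'I_n, and C_i := nth set0 C (i-1). *)
Definition cat_at n (C : seq {set 'I_n}) (i : nat) : {set 'I_n} := nth set0 C i.-1.

Definition is_conf n (k : nat) (C : seq {set 'I_n}) : Prop :=
  [/\ 0 < size C, all (fun A : {set 'I_n} => #|A| == k) C & uniq C].

Definition shelling n (k : nat) (C : seq {set 'I_n}) : Prop :=
  forall i j, 1 <= i -> i < j -> j <= size C ->
    exists z, [/\ 1 <= z, z < j,
      #|cat_at C z :&: cat_at C j| = k.-1 &
      cat_at C i :&: cat_at C j \subset cat_at C z :&: cat_at C j].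

Definition dual_graph n (k : nat) (C : seq {set 'I_n}) : rel nat :=
  fun i j => #|cat_at C i :&: cat_at C j| == k.-1.

Definition next_track (h : nat) (e : rel nat) (v : nat) : option nat :=
  if [seq j <- iota v.+1 (h - v) | e v j] is w :: _ then Some w else None.

Fixpoint track_from (h : nat) (e : rel nat) (fuel v : nat) : seq nat :=
  match fuel with
  | 0 => [:: v]
  | fuel'.+1 =>
      match next_track h e v with
      | Some w => v :: track_from h e fuel' w
      | None => [:: v]
      end
  end.

(* T_G = (v_1, ..., v_r), v_1 = 1; fuel h suffices since the v_i increase. *)
Definition track (h : nat) (e : rel nat) : seq nat := track_from h e h 1.

Definition promotion (h : nat) (e : rel nat) (i : nat) : nat :=
  let T := track h e in
  if i \in T then
    let j := index i T in
    if j.+1 < size T then (nth 0 T j.+1).-1 else h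
  else i.-1.

(* sigma C := (C_{sigma^-1(1)}, ..., C_{sigma^-1(h)}) for a permutation
   sigma of [h] given as a function on nat; sigma^-1(m) is the i in [h]
   with sigma i = m. *)
Definition perm_inv (h : nat) (sigma : nat -> nat) (m : nat) : nat :=
  nth 0 (iota 1 h) (find (fun i => sigma i == m) (iota 1 h)).

Definition perm_act n (sigma : nat -> nat) (C : seq {set 'I_n}) : seq {set 'I_n} :=
  [seq cat_at C (perm_inv (size C) sigma m) | m <- iota 1 (size C)].

Definition promoteD n (k : nat) (C : seq {set 'I_n}) : seq {set 'I_n} :=
  perm_act (promotion (size C) (dual_graph k C)) C.

From mathcomp Require Import all_boot zify.
Set Implicit Arguments. Unset Strict Implicit. Unset Printing Implicit Defensive.

(* Write p for the promotion permutation of [h] and T for the track.  Two facts follow from the minimality in the choice of the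
   track: p keeps the orientation of every edge {z, b} with z < b, and if p
   inverts b < c then b is on the track, {b, c} is not an edge, and p puts every
   z < c other than b before b.  Given b and c with p c < p b, a witness d with
   p d < p b, |C_d :&: C_b| = k - 1 and C_c :&: C_b \subset C_d :&: C_b is found by
   strong induction on c: if c < b the shelling witness of C for (c, b) works;
   if c > b the shelling witness z < c of C for (b, c) differs from b, is
   placed before b, and C_c :&: C_b \subset C_z :&: C_b.  Reading this through
   the relabelling by p gives the shelling property of the promoted sequence. *)

Definition next_in (d : nat) (s : seq nat) (i : nat) : nat :=
  nth d s (find (fun u => i < u) s).

Lemma next_in_gt d s i : i < d -> i < next_in d s i.
Proof.
rewrite /next_in => lt_id.
case: (boolP (has (fun u => i < u) s)) => [s_gt|/hasNfind->]; first exact: nth_find.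
by rewrite nth_default.
Qed.

Lemma next_in_le d s i : all (fun u => u <= d) s -> next_in d s i <= d.
Proof.
rewrite /next_in => /allP s_le.
case: (ltnP (find (fun u => i < u) s) (size s)) => [lt|ge]; first exact/s_le/mem_nth.
by rewrite nth_default.
Qed.

Lemma next_in_mem d s i : next_in d s i != d -> next_in d s i \in s.
Proof.
rewrite /next_in; case: (ltnP (find (fun u => i < u) s) (size s)) => [lt _|ge].
  exact: mem_nth.
by rewrite nth_default ?eqxx.
Qed.

Lemma next_in_min d s i u : sorted ltn s -> u \in s -> i < u -> next_in d s i <= u.
Proof.
rewrite /next_in; elim: s => [|y s IH] //= srt; rewrite inE.
case: ifP => [_ /orP[/eqP-> //|us] _|iy /orP[/eqP eq_uy|us] iu].
- by have /allP/(_ _ us)/ltnW := order_path_min ltn_trans srt.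
- by rewrite -eq_uy iu in iy.
- exact: IH (path_sorted srt) us iu.
Qed.

Lemma next_in_index d s x : sorted ltn s -> x \in s ->
  next_in d s x = nth d s (index x s).+1.
Proof.
rewrite /next_in; elim: s => [|y s IH] //= srt; rewrite inE.
case: (y =P x) => [<- _|ne_yx /orP[/eqP/esym //|xs]].
  rewrite ltnn /=; case: s srt {IH} => //= y' s' /andP[-> _] //.
have /allP/(_ _ xs) yx := order_path_min ltn_trans srt.
by rewrite ltnNge (ltnW yx) /= IH // (path_sorted srt).
Qed.

Lemma next_track_Some h e v w : next_track h e v = Some w ->
  [/\ v < w, w <= h, e v w & forall j, v < j <= h -> e v j -> w <= j].
Proof.
rewrite /next_track.
have srt : sorted ltn [seq j <- iota v.+1 (h - v) | e v j].
  exact: (sorted_filter ltn_trans _ (iota_ltn_sorted _ _)).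
have mem j : (j \in [seq j <- iota v.+1 (h - v) | e v j]) = e v j && (v < j <= h).
  by rewrite mem_filter mem_iota; congr (_ && _); apply/idP/idP; lia.
case: [seq j <- iota v.+1 (h - v) | e v j] srt mem => [|w' l] // srt mem [<-].
have := mem w'; rewrite inE eqxx => /esym/andP[evw /andP[vw wh]].
split=> // j jr ej.
have := mem j; rewrite ej jr inE => /orP[/eqP-> //|jl].
by have /allP/(_ _ jl)/ltnW := order_path_min ltn_trans srt.
Qed.

Lemma next_track_None h e v : next_track h e v = None ->
  forall j, v < j <= h -> ~~ e v j.
Proof.
rewrite /next_track => none j jr; apply/negP => ej.
have : j \in [seq j <- iota v.+1 (h - v) | e v j] by rewrite mem_filter ej mem_iota; lia.
by case: [seq j <- iota v.+1 (h - v) | e v j] none.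
Qed.

Lemma track_from_spec h e f v : 1 <= v <= h -> h <= v + f ->
  exists s, [/\ track_from h e f v = v :: s, path ltn v s, all (fun u => u <= h) s &
    forall t j, t \in v :: s -> t < j <= h -> e t j ->
      exists2 u, u \in v :: s & t < u <= j].
Proof.
elim: f v => [|f IH] v vh hf /=.
  by exists [::]; split=> // t j; rewrite inE => /eqP->; lia.
case N: (next_track h e v) => [w|]; last first.
  exists [::]; split=> // t j; rewrite inE => /eqP-> jr ej.
  by have := next_track_None N jr; rewrite ej.
have [vw wh evw w_min] := next_track_Some N.
have [s [-> srt le_h reach]] := IH w ltac:(lia) ltac:(lia).
exists (w :: s); split=> //=; [by rewrite vw | by rewrite wh |].
move=> t j; rewrite inE => /orP[/eqP-> jr ej|ts jr ej].
  by exists w; [rewrite !inE eqxx orbT | rewrite vw w_min].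
by have [u us tu] := reach t j ts jr ej; exists u; rewrite // inE us orbT.
Qed.

Section Promotion.

Variables (h : nat) (e : rel nat).
Hypothesis h_gt0 : 0 < h.

Local Notation T := (track h e).
Local Notation nt := (next_in h.+1 (track h e)).
Local Notation p := (promotion h e).

Let track_spec : exists s, [/\ T = 1 :: s, path ltn 1 s, all (fun u => u <= h) s &
    forall t j, t \in T -> t < j <= h -> e t j -> exists2 u, u \in T & t < u <= j].
Proof.
have [s [T_def srt le_h reach]] := track_from_spec e (f := h) (v := 1) h_gt0 (leq_addl _ _).
by exists s; rewrite /track T_def.
Qed.

Lemma mem_track1 : 1 \in T.
Proof. by have [s [-> _ _ _]] := track_spec; rewrite inE eqxx. Qed.

Lemma track_sorted : sorted ltn T.
Proof. by have [s [-> srt _ _]] := track_spec. Qed.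

Lemma track_bounded t : t \in T -> 1 <= t <= h.
Proof.
have [s [-> srt le_h _]] := track_spec; rewrite inE => /orP[/eqP-> //|ts].
have /allP/(_ _ ts)/ltnW -> := order_path_min ltn_trans srt.
exact: (allP le_h).
Qed.

Lemma track_closed t j : t \in T -> t < j <= h -> e t j -> exists2 u, u \in T & t < u <= j.
Proof. by have [s [_ _ _ reach]] := track_spec; apply: reach. Qed.

Lemma promotionE i : p i = if i \in T then (nt i).-1 else i.-1.
Proof.
rewrite /promotion; case: ifP => // iT.
rewrite (next_in_index _ track_sorted iT).
case: ltnP => [lt|ge]; first by rewrite (set_nth_default h.+1).
by rewrite nth_default.
Qed.

Lemma next_track_gt i : i <= h -> i < nt i.
Proof. by move=> le_ih; apply: next_in_gt. Qed.

Lemma next_track_le i : nt i <= h.+1.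
Proof. by apply/next_in_le/allP => t /track_bounded; lia. Qed.

Lemma next_track_mem i : nt i <= h -> nt i \in T.
Proof. by move=> le_h; apply: next_in_mem; lia. Qed.

Lemma next_track_min i u : u \in T -> i < u -> nt i <= u.
Proof. exact: next_in_min track_sorted. Qed.

Lemma next_track_edge t j : t \in T -> t < j <= h -> e t j -> nt t <= j.
Proof.
move=> tT jr /(track_closed tT jr)[u uT /andP[tu uj]].
exact: leq_trans (next_track_min uT tu) uj.
Qed.

Lemma promotion_range i : 1 <= i <= h -> 1 <= p i <= h.
Proof.
move=> hi; rewrite promotionE; case: ifP => iT.
  by have := next_track_gt (i := i); have := next_track_le i; lia.
have : i != 1 by apply: contraFneq iT => ->; exact: mem_track1.
lia.
Qed.

Lemma promotion_inj i i' : 1 <= i <= h -> 1 <= i' <= h -> p i = p i' -> i = i'.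
Proof.
wlog lt_ii' : i i' / i < i'.
  move=> W hi hi' E; case: (ltngtP i i') => [lt|gt|//]; first exact: W.
  exact/esym/W.
move=> hi hi'; rewrite !promotionE.
have := next_track_gt (i := i); have := next_track_gt (i := i').
case iT: (i \in T); case i'T: (i' \in T) => gt' gt.
- by have := next_track_min i'T lt_ii'; lia.
- move=> E; have nt_i : nt i = i' by lia.
  by have := @next_track_mem i; rewrite nt_i i'T; lia.
- lia.
- lia.
Qed.

Lemma promotion_edge_lt z b : 1 <= z -> z < b -> b <= h -> e z b -> p z < p b.
Proof.
move=> z1 zb bh ezb; rewrite !promotionE.
have := next_track_gt (i := z); have := next_track_gt (i := b).
case bT: (b \in T); case zT: (z \in T) => gt_b gt_z.
- by have := next_track_min bT zb; lia.
- lia.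
- have le_b : nt z <= b by apply: next_track_edge zT _ ezb; rewrite zb bh.
  have : nt z != b by apply: contraFneq bT => <-; apply: next_track_mem; lia.
  lia.
- lia.
Qed.

Lemma promotion_inversion b c : b < c -> c <= h -> p c < p b ->
  [/\ b \in T, c \notin T & c < nt b].
Proof.
move=> bc ch; rewrite !promotionE.
have := next_track_gt (i := b); have := next_track_gt (i := c).
case bT: (b \in T); case cT: (c \in T) => gt_c gt_b pcb.
- by have := next_track_min cT bc; lia.
- by split=> //; lia.
- lia.
- lia.
Qed.

Lemma promotion_inversion_nonedge b c : b < c -> c <= h -> p c < p b -> ~~ e b c.
Proof.
move=> bc ch /(promotion_inversion bc ch)[bT _ lt_c]; apply/negP => ebc.
have : nt b <= c by apply: next_track_edge bT _ ebc; rewrite bc ch.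
lia.
Qed.

Lemma promotion_inversion_lt b c z : b < c -> c <= h -> p c < p b ->
  z < c -> z != b -> p z < p b.
Proof.
move=> bc ch /[dup] pcb /(promotion_inversion bc ch)[bT cT lt_c] zc zb.
move: pcb; rewrite !promotionE bT (negbTE cT); case: ifP => zT _; last lia.
case: (ltngtP z b) zb => // [zb' | bz] _.
  by have := next_track_min bT zb'; lia.
by have := next_track_min zT bz; lia.
Qed.

End Promotion.

Section PermInv.

Variables (h : nat) (p : nat -> nat).
Hypothesis p_range : forall i, 1 <= i <= h -> 1 <= p i <= h.
Hypothesis p_inj : forall i i', 1 <= i <= h -> 1 <= i' <= h -> p i = p i' -> i = i'.

Lemma perm_onto m : 1 <= m <= h -> has (fun i => p i == m) (iota 1 h).
Proof.
move=> hm.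
have inj : {in iota 1 h &, injective p} by move=> x y; rewrite !mem_iota => hx hy; apply: p_inj; lia.
have U : uniq (map p (iota 1 h)) by rewrite (map_inj_in_uniq inj) iota_uniq.
have S : {subset map p (iota 1 h) <= iota 1 h}.
  by move=> x /mapP[y]; rewrite !mem_iota => hy ->; have := p_range hy; lia.
have [_ eq_img] := uniq_min_size U S ltac:(by rewrite size_map).
have : m \in map p (iota 1 h) by rewrite eq_img mem_iota; lia.
by case/mapP=> y yi ->; apply/hasP; exists y.
Qed.

Lemma perm_inv_range m : 1 <= m <= h -> 1 <= perm_inv h p m <= h.
Proof.
move=> /perm_onto; rewrite has_find size_iota /perm_inv => lt_h.
by rewrite nth_iota //; lia.
Qed.

Lemma perm_invKV m : 1 <= m <= h -> p (perm_inv h p m) = m.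
Proof. by move=> /perm_onto/(nth_find 0)/eqP. Qed.

Lemma perm_invK i : 1 <= i <= h -> perm_inv h p (p i) = i.
Proof.
move=> hi; have hpi := p_range hi.
exact: p_inj (perm_inv_range hpi) hi (perm_invKV hpi).
Qed.

End PermInv.

Lemma mem_cat_at n (C : seq {set 'I_n}) i : 1 <= i <= size C -> cat_at C i \in C.
Proof. by case: i => // i /andP[_ lt_i]; apply: mem_nth. Qed.

Lemma cat_at_inj n (C : seq {set 'I_n}) i j : uniq C ->
  1 <= i <= size C -> 1 <= j <= size C -> cat_at C i = cat_at C j -> i = j.
Proof.
move=> uC; case: i => // i /andP[_ hi]; case: j => // j /andP[_ hj].
by rewrite /cat_at /= => /eqP; rewrite nth_uniq // => /eqP->.
Qed.

Lemma size_perm_act n (p : nat -> nat) (C : seq {set 'I_n}) :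
  size (perm_act p C) = size C.
Proof. by rewrite size_map size_iota. Qed.

Lemma cat_at_perm_act n (p : nat -> nat) (C : seq {set 'I_n}) m : 1 <= m <= size C ->
  cat_at (perm_act p C) m = cat_at C (perm_inv (size C) p m).
Proof.
case: m => // m /andP[_ hm].
by rewrite /cat_at (nth_map 0) ?size_iota // nth_iota // add1n.
Qed.

Section ShellingPermAct.

Variables (n k : nat) (C : seq {set 'I_n}) (p : nat -> nat).

Local Notation h := (size C).
Local Notation e := (dual_graph k C).

Hypothesis p_range : forall i, 1 <= i <= h -> 1 <= p i <= h.
Hypothesis p_inj : forall i i', 1 <= i <= h -> 1 <= i' <= h -> p i = p i' -> i = i'.

Lemma is_conf_perm_act : is_conf k C -> is_conf k (perm_act p C).
Proof.
case=> h_gt0 allk uC; split; first by rewrite size_perm_act.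
  apply/allP => A /mapP[m]; rewrite mem_iota add1n => hm ->.
  exact: (allP allk) (mem_cat_at (perm_inv_range p_range p_inj hm)).
rewrite map_inj_in_uniq ?iota_uniq // => m m'; rewrite !mem_iota !add1n => hm hm' E.
have := cat_at_inj uC (perm_inv_range p_range p_inj hm) (perm_inv_range p_range p_inj hm') E.
by move=> /(congr1 p); rewrite !perm_invKV.
Qed.

Hypothesis p_edge : forall z b, 1 <= z -> z < b -> b <= h -> e z b -> p z < p b.
Hypothesis p_inv_nonedge : forall b c, b < c -> c <= h -> p c < p b -> ~~ e b c.
Hypothesis p_inv_lt : forall b c z, b < c -> c <= h -> p c < p b ->
  z < c -> z != b -> p z < p b.

Lemma perm_shelling_witness : shelling k C ->
  forall b c, 1 <= b <= h -> 1 <= c <= h -> p c < p b ->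
  exists d, [/\ 1 <= d <= h, p d < p b, #|cat_at C d :&: cat_at C b| = k.-1 &
    cat_at C c :&: cat_at C b \subset cat_at C d :&: cat_at C b].
Proof.
move=> shC b c /andP[b_gt0 bh]; elim/ltn_ind: c => c IH /andP[c_gt0 ch] pcb.
case: (ltngtP c b) => [cb | bc | eq_cb]; last by rewrite eq_cb ltnn in pcb.
  have [z [z_gt0 zb ezb sub]] := shC c b c_gt0 cb bh.
  by exists z; split=> //; [lia | apply: p_edge => //; apply/eqP].
have [z [z_gt0 zc ezc sub]] := shC b c b_gt0 bc ch.
have zb : z != b by apply: contraNneq (p_inv_nonedge bc ch pcb) => <-; apply/eqP.
have [|d [hd pdb edb sub_d]] := IH z zc _ (p_inv_lt bc ch pcb zc zb); first lia.
exists d; split=> //; apply: subset_trans sub_d.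
apply/subsetP => x; rewrite !inE => /andP[xc xb].
by have := subsetP sub x; rewrite !inE xb xc => /(_ erefl)/andP[->].
Qed.

Lemma shelling_perm_act : shelling k C -> shelling k (perm_act p C).
Proof.
move=> shC i j i_gt0 ij; rewrite size_perm_act => jh.
have hi : 1 <= i <= h by lia.
have hj : 1 <= j <= h by lia.
have [d [hd pd_lt edb sub]] := perm_shelling_witness shC (perm_inv_range p_range p_inj hj)
  (perm_inv_range p_range p_inj hi) ltac:(by rewrite !perm_invKV).
rewrite perm_invKV // in pd_lt.
have hpd := p_range hd.
exists (p d); rewrite !cat_at_perm_act // perm_invK //.
by split=> //; lia.
Qed.

End ShellingPermAct.

Theorem theorem5p4 (k n : nat) (C : seq {set 'I_n}) :
  0 < k -> k <= n -> is_conf k C -> shelling k C ->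
  is_conf k (promoteD k C) /\ shelling k (promoteD k C).
Proof.
move=> _ _ confC shC; have [h_gt0 _ _] := confC.
have p_range := @promotion_range _ (dual_graph k C) h_gt0.
have p_inj := @promotion_inj _ (dual_graph k C) h_gt0.
split; first exact: is_conf_perm_act.
apply: shelling_perm_act p_range p_inj _ _ _ shC.
- exact: promotion_edge_lt.
- exact: promotion_inversion_nonedge.
- exact: promotion_inversion_lt.
Qed.
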